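(* If $\phi\in C(\mathbb{Z}_p,\mathbb{C}_p)$ and $y\in\mathbb{Z}_p$, then in $\mathbb{C}_p[[t]]$ $$(1-t)^yA(\phi)=A(S^y(\phi))\quad\text{and}\quad(1-t)^yP(\phi)=P(S^y(\phi)).$$
   Context: Fix a prime $p$. $\mathbb{C}_p$ denotes the completion of an algebraic closure of $\mathbb{Q}_p$, with absolute value $|\cdot|$ normalized by $|p|=1/p$. $C(\mathbb{Z}_p,\mathbb{C}_p)$ is the $\mathbb{C}_p$-Banach space of continuous functions $\mathbb{Z}_p\to\mathbb{C}_p$ with the sup-norm $\|\cdot\|$. For $n\in\mathbb{Z}_{\ge0}$ and $x\in\mathbb{Z}_p$, $\binom{x}{n}=x(x-1)\cdots(x-n+1)/n!$. For $\phi\in C(\mathbb{Z}_p,\mathbb{C}_p)$ let $(\nabla\phi)(x)=\phi(x+1)-\phi(x)$; every such $\phi$ has the Mahler expansion $\phi(x)=\sum_{n\ge0}(\nabla^n\phi)(0)\binom{x}{n}$. Define $P(\phi)=\sum_{n\ge0}(\nabla^n\phi)(0)\,t^n/n!$ and $A(\phi)=\sum_{n\ge0}\phi(n)\,t^n/n!=e^{t}P(\phi)$ in $\mathbb{C}_p[[t]]$. For $y\in\mathbb{Z}_p$ define $S^y(\phi)\in C(\mathbb{Z}_p,\mathbb{C}_p)$ by $S^y(\phi)(x)=\sum_{k\ge0}(-1)^k k!\binom yk\binom xk\phi(x-k)$. For $y\in\mathbb{Z}_p$, $(1-t)^y:=\sum_{k\ge0}(-1)^k\binom yk t^k\in\mathbb{C}_p[[t]]$.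 *)

From HB Require Import structures.
From mathcomp Require Import all_boot all_order all_algebra.
From mathcomp Require Import boolp classical_sets reals.
Set Implicit Arguments. Unset Strict Implicit. Unset Printing Implicit Defensive.
Import Order.TTheory GRing.Theory Num.Theory.
Local Open Scope ring_scope.

Section Padic.
Variables (R : realType) (K : closedFieldType) (abs : K -> R).

(* Axioms characterizing (K, abs) as C_p : an algebraically closed field
   (closedFieldType) of characteristic 0 with a non-archimedean absolute value
   normalised by |p| = 1/p, complete, in which the algebraic closure of Q is
   dense (so K is the completion of an algebraic closure of Q_p). *)
Definition abs_cauchy (u : nat -> K) : Prop :=
  forall e : R, 0 < e -> exists N : nat, forall m n : nat,
    (N <= m)%N -> (N <= n)%N -> abs (u m - u n) < e.

Definition abs_lim (u : nat -> K) (l : K) : Prop :=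
  forall e : R, 0 < e -> exists N : nat, forall n : nat,
    (N <= n)%N -> abs (u n - l) < e.

Definition is_Cp (p : nat) : Prop :=
     prime p
  /\ [pchar K] =i pred0
  /\ (forall x : K, abs x = 0 <-> x = 0)
  /\ (forall x y : K, abs (x * y) = abs x * abs y)
  /\ (forall x y : K, abs (x + y) <= Num.max (abs x) (abs y))
  /\ abs (p%:R) = (p%:R)^-1
  /\ (forall u, abs_cauchy u -> exists l, abs_lim u l)
  /\ (forall (x : K) (e : R), 0 < e -> exists z : K,
          (exists q : {poly rat}, q != 0 /\ root (map_poly ratr q) z)
          /\ abs (x - z) < e).

Definition in_Zp (x : K) : Prop :=
  forall e : R, 0 < e -> exists n : int, abs (x - n%:~R) < e.

(* phi : K -> K restricted to Z_p is continuous (values off Z_p irrelevant). *)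
Definition cont_Zp (phi : K -> K) : Prop :=
  forall x, in_Zp x -> forall e : R, 0 < e -> exists2 d : R, 0 < d &
    forall x', in_Zp x' -> abs (x' - x) < d -> abs (phi x' - phi x) < e.

Definition binom (x : K) (n : nat) : K :=
  (\prod_(i < n) (x - i%:R)) / (n`!)%:R.

(* sum of a convergent series (partial sums \sum_(i < n)); 0 if divergent *)
Definition series_sum (a : nat -> K) : K :=
  xget 0 (fun s => abs_lim (fun n => \sum_(i < n) a i) s).

Definition Sy (y : K) (phi : K -> K) : K -> K := fun x =>
  series_sum (fun k => (-1) ^+ k * (k`!)%:R * binom y k * binom x k
                        * phi (x - k%:R)).

Definition fps := nat -> K.
Definition fps_mul (f g : fps) : fps :=
  fun n => \sum_(i < n.+1) f i * g (n - i)%N.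

Definition one_minus_t_pow (y : K) : fps := fun k => (-1) ^+ k * binom y k.

Definition nabla (phi : K -> K) : K -> K := fun x => phi (x + 1) - phi x.

Definition Aser (phi : K -> K) : fps := fun n => phi n%:R / (n`!)%:R.
Definition Pser (phi : K -> K) : fps := fun n => iter n nabla phi 0 / (n`!)%:R.

End Padic.

From HB Require Import structures.
From mathcomp Require Import all_boot all_order all_algebra.
From mathcomp Require Import boolp classical_sets reals.
From mathcomp Require Import ring.
Set Implicit Arguments. Unset Strict Implicit. Unset Printing Implicit Defensive.
Import Order.TTheory GRing.Theory Num.Theory.
Local Open Scope ring_scope.

(* At t^n both sides are exponential generating functions, so the identity for
   A is the binomial convolution
     S^y(phi)(n) = sum_(k <= n) C(n,k) [(-1)^k k! binom y k] phi(n - k),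
   which is the definition of S^y(phi) at x = n, the series being finite
   because binom n k = 0 for k > n.  Newton's formula for nabla^n gives
   P(psi) = A(psi) e^(-t) for every psi, so the identity for P follows from
   the one for A by associativity of the Cauchy product. *)

Section AbsoluteValue.
Variables (R : realType) (K : closedFieldType) (abs : K -> R).
Hypothesis abs_eq0 : forall x : K, abs x = 0 <-> x = 0.
Hypothesis absM : forall x y : K, abs (x * y) = abs x * abs y.

(* Every x is a square in K, so abs x = (abs w)^2. *)
Lemma abs_ge0 (x : K) : 0 <= abs x.
Proof.
have : size ('X^2 - x%:P : {poly K}) != 1%N by rewrite size_XnsubC.
case/closed_rootP => w; rewrite /root !hornerE subr_eq0 => /eqP <-.
by rewrite expr2 absM -expr2 sqr_ge0.
Qed.

Lemma abs_lim_eventually_const (u : nat -> K) (c l : K) (N : nat) :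
  (forall n, (N <= n)%N -> u n = c) -> abs_lim abs u l -> l = c.
Proof.
move=> u_c u_l; apply/eqP; rewrite eq_sym -subr_eq0; apply/eqP/abs_eq0.
apply/eqP; rewrite eq_le abs_ge0 andbT leNgt; apply/negP => abs_gt0.
have [M HM] := u_l _ abs_gt0.
by have := HM (maxn N M) (leq_maxr _ _); rewrite u_c ?leq_maxl // ltxx.
Qed.

Lemma series_sum_finite (a : nat -> K) (N : nat) :
  (forall k, (N <= k)%N -> a k = 0) -> series_sum abs a = \sum_(i < N) a i.
Proof.
move=> a_eq0.
have partial_sum : forall n, (N <= n)%N -> \sum_(i < n) a i = \sum_(i < N) a i.
  elim=> [|n IHn]; first by rewrite leqn0 => /eqP ->.
  rewrite leq_eqVlt => /orP [/eqP -> //| ltNn].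
  by rewrite big_ord_recr /= a_eq0 // addr0 IHn.
apply: xget_unique; last by move=> z; apply: abs_lim_eventually_const partial_sum.
move=> e e_gt0; exists N => n leNn; rewrite partial_sum // subrr.
by have [_ ->] := abs_eq0 0.
Qed.

End AbsoluteValue.

Lemma prod_natrB (T : pzRingType) (n k : nat) :
  \prod_(i < k) ((n%:R : T) - i%:R) = (n ^_ k)%:R.
Proof.
elim: k => [|k IHk]; first by rewrite big_ord0 ffactn0.
rewrite big_ord_recr /= IHk ffactnSr natrM.
by case: (leqP k n) => [/natrB -> // | ltnk]; rewrite ffact_small // !mul0r.
Qed.

Lemma iter_nablaE (K : closedFieldType) (f : K -> K) (n : nat) (x : K) :
  iter n (@nabla K) f x =
  \sum_(j < n.+1) (-1) ^+ (n - j) * ('C(n, j))%:R * f (x + j%:R).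
Proof.
elim: n x => [|n IHn] x; first by rewrite big_ord1 /= expr0 !mul1r addr0.
rewrite iterS /nabla !IHn [in RHS]big_ord_recl /= subn0 bin0 mulr1 addr0.
under [in RHS]eq_bigr => i _ do
  rewrite /bump /= add1n subSS binS natrD mulrDr mulrDl.
rewrite big_split /=.
set s := fun m => (-1) ^+ m : K.
have drop_last :
    \sum_(i < n.+1) s (n - i)%N * ('C(n, i.+1))%:R * f (x + i.+1%:R)
  = \sum_(i < n) s (n - i)%N * ('C(n, i.+1))%:R * f (x + i.+1%:R).
  by rewrite big_ord_recr /= bin_small // mulr0 mul0r addr0.
have shift :
    \sum_(i < n.+1) s (n - i)%N * ('C(n, i))%:R * f (x + i.+1%:R)
  = \sum_(j < n.+1) s (n - j)%N * ('C(n, j))%:R * f (x + 1 + j%:R).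
  by apply: eq_bigr => i _; rewrite -addrA -natr1 (addrC 1).
have split_first :
    \sum_(j < n.+1) s (n - j)%N * ('C(n, j))%:R * f (x + j%:R)
  = s n * f x - \sum_(i < n) s (n - i)%N * ('C(n, i.+1))%:R * f (x + i.+1%:R).
  rewrite big_ord_recl /= subn0 bin0 mulr1 addr0; congr (_ + _).
  rewrite -sumrN; apply: eq_bigr => i _.
  by rewrite /bump /= add1n /s -(subnSK (ltn_ord i)) exprS mulN1r !mulNr opprK.
by rewrite -/(s _) drop_last shift split_first /s exprS; ring.
Qed.

Section CauchyProduct.
Variable K : closedFieldType.

Lemma fps_mul_coefM (a b : fps K) (P Q : {poly K}) (n : nat) :
  (forall i, (i <= n)%N -> a i = P`_i) -> (forall i, (i <= n)%N -> b i = Q`_i) ->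
  fps_mul a b n = (P * Q)`_n.
Proof.
move=> aP bQ; rewrite coefM /fps_mul; apply: eq_bigr => i _.
by rewrite aP ?bQ ?leq_subr // -ltnS.
Qed.

Definition fps_trunc (f : fps K) (n : nat) : {poly K} := \poly_(i < n.+1) f i.

Lemma coef_fps_trunc (f : fps K) (n i : nat) : (i <= n)%N -> (fps_trunc f n)`_i = f i.
Proof. by move=> lein; rewrite coef_poly ltnS lein. Qed.

Lemma fps_mul_trunc (f g : fps K) (n i : nat) : (i <= n)%N ->
  fps_mul f g i = (fps_trunc f n * fps_trunc g n)`_i.
Proof.
by move=> lein; apply: fps_mul_coefM => j leji;
  rewrite coef_fps_trunc //; apply: leq_trans leji lein.
Qed.

Lemma fps_mulA (f g h : fps K) :
  fps_mul (fps_mul f g) h = fps_mul f (fps_mul g h).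
Proof.
apply: funext => n.
rewrite (@fps_mul_coefM _ _ (fps_trunc f n * fps_trunc g n) (fps_trunc h n))
        ?(@fps_mul_coefM _ _ (fps_trunc f n) (fps_trunc g n * fps_trunc h n))
        ?mulrA // => i lein; rewrite ?coef_fps_trunc //; exact: fps_mul_trunc.
Qed.

End CauchyProduct.

Section CharacteristicZero.
Variable K : closedFieldType.
Hypothesis K_char0 : [pchar K] =i pred0.

Lemma natf_gt0_neq0 (n : nat) : (0 < n)%N -> (n%:R : K) != 0.
Proof. by have /pcharf0P -> := K_char0; rewrite -lt0n. Qed.

Lemma binom_natr (n k : nat) : binom (n%:R : K) k = ('C(n, k))%:R.
Proof.
by rewrite /binom prod_natrB -bin_ffact natrM mulfK // natf_gt0_neq0 ?fact_gt0.
Qed.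

Definition egf (a : nat -> K) : fps K := fun n => a n / (n`!)%:R.

Definition binomial_convolution (a b : nat -> K) (n : nat) : K :=
  \sum_(k < n.+1) ('C(n, k))%:R * a k * b (n - k)%N.

Lemma fps_mul_egf (a b : nat -> K) :
  fps_mul (egf a) (egf b) = egf (binomial_convolution a b).
Proof.
apply: funext => n; rewrite /egf /binomial_convolution /fps_mul mulr_suml.
apply: eq_bigr => [[k ltkn]] _ /=.
have lekn : (k <= n)%N by rewrite -ltnS.
have [k_nz nk_nz bin_nz] : [/\ ((k`!)%:R : K) != 0, (((n - k)`!)%:R : K) != 0
    & (('C(n, k))%:R : K) != 0].
  by split; apply: natf_gt0_neq0; rewrite ?fact_gt0 ?bin_gt0.
rewrite -(bin_fact lekn) !natrM; field.
by rewrite k_nz nk_nz bin_nz.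
Qed.

Lemma one_minus_t_pow_egf (y : K) :
  one_minus_t_pow y = egf (fun k => (-1) ^+ k * (k`!)%:R * binom y k).
Proof.
apply: funext => k; rewrite /egf /one_minus_t_pow [_ * _ * binom y k]mulrAC.
by rewrite mulfK // natf_gt0_neq0 ?fact_gt0.
Qed.

Lemma Pser_Aser (f : K -> K) :
  Pser f = fps_mul (Aser f) (egf (fun n => (-1) ^+ n)).
Proof.
rewrite [Aser f]/(egf (fun n => f n%:R)) fps_mul_egf.
apply: funext => n; rewrite /Pser /egf /binomial_convolution iter_nablaE.
by congr (_ / _); apply: eq_bigr => k _; rewrite add0r -mulrA mulrC.
Qed.

Lemma Sy_natr (R : realType) (abs : K -> R)
    (abs_eq0 : forall x : K, abs x = 0 <-> x = 0)
    (absM : forall x y : K, abs (x * y) = abs x * abs y)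
    (y : K) (phi : K -> K) (n : nat) :
  Sy abs y phi n%:R = binomial_convolution
    (fun k => (-1) ^+ k * (k`!)%:R * binom y k) (fun m => phi m%:R) n.
Proof.
rewrite /Sy /binomial_convolution (series_sum_finite abs_eq0 absM (N := n.+1)).
  apply: eq_bigr => [[k ltkn]] _ /=.
  by rewrite binom_natr -natrB -1?ltnS // [_ * 'C(n, k)%:R]mulrC.
by move=> k ltnk; rewrite binom_natr bin_small // mulr0 mul0r.
Qed.

End CharacteristicZero.

Theorem proposition6p2 (p : nat) (R : realType) (K : closedFieldType)
    (abs : K -> R) (HCp : is_Cp abs p)
    (phi : K -> K) (Hphi : cont_Zp abs phi) (y : K) (Hy : in_Zp abs y) :
  fps_mul (one_minus_t_pow y) (Aser phi) = Aser (Sy abs y phi) /\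
  fps_mul (one_minus_t_pow y) (Pser phi) = Pser (Sy abs y phi).
Proof.
have [_ [K_char0 [abs_eq0 [absM _]]]] := HCp.
have A_identity : fps_mul (one_minus_t_pow y) (Aser phi) = Aser (Sy abs y phi).
  rewrite (one_minus_t_pow_egf K_char0) [Aser phi]/(egf (fun n => phi n%:R)).
  rewrite (fps_mul_egf K_char0).
  by apply: funext => n; rewrite /Aser /egf (Sy_natr K_char0 abs_eq0 absM).
split; first exact: A_identity.
by rewrite !(Pser_Aser K_char0) -fps_mulA A_identity.
Qed.
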